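(* Let $M$ be a $2^n\times2^n$ Hermitian matrix, let $k\le n$, and let $\varphi$ be a $2^k\times2^k$ density operator. Let $M_\varphi=\mathrm{Tr}_{n-k+1,\dots,n}\big[(I\otimes\varphi)M\big]$. Then for every $\varepsilon\in[0,1]$, $\deg_\varepsilon(M_\varphi)\le\deg_\varepsilon(M)$.
   Context: Pauli degree: with $P_\sigma=\bigotimes_iP_{\sigma_i}$, $P_0=I,P_1=X,P_2=Y,P_3=Z$, every $2^m\times2^m$ matrix is $A=\sum_\sigma\hat A(\sigma)P_\sigma$, $\deg(A)=\max\{|\{i:\sigma_i\ne0\}|:\hat A(\sigma)\ne0\}$, and $\deg_\varepsilon(A)=\min\{\deg(B):\|A-B\|\le\varepsilon\}$ with $\|\cdot\|$ the spectral norm. $\mathrm{Tr}_{n-k+1,\dots,n}$ is the partial trace over the last $k$ qubits. *)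

From HB Require Import structures.
From mathcomp Require Import all_boot all_order all_algebra.
From mathcomp Require Import complex.
From mathcomp Require Import boolp classical_sets reals.
Set Implicit Arguments. Unset Strict Implicit. Unset Printing Implicit Defensive.
Import Order.TTheory GRing.Theory Num.Theory.
Local Open Scope ring_scope.

Lemma hi_proof p q (x : 'I_(p * q)) : (x %/ q < p)%N.
Proof.
have := ltn_ord x; move: (nat_of_ord x) => y; clear x.
case: q => [|q]; first by rewrite muln0.
by move=> h; rewrite ltn_divLR.
Qed.
Lemma lo_proof p q (x : 'I_(p * q)) : (x %% q < q)%N.
Proof.
have := ltn_ord x; move: (nat_of_ord x) => y; clear x.
case: q => [|q]; first by rewrite muln0.
by rewrite ltn_mod.
Qed.
Lemma pair_proof p q (i : 'I_p) (l : 'I_q) : (i * q + l < p * q)%N.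
Proof.
have := ltn_ord i; have := ltn_ord l => hl hi.
apply: (@leq_trans (i * q + q)); first by rewrite ltn_add2l.
by rewrite addnC -mulSn leq_mul2r hi orbT.
Qed.
(* x : 'I_(p*q) corresponds to the pair (hi x, lo x), x = hi x * q + lo x *)
Definition hi p q (x : 'I_(p * q)) : 'I_p := Ordinal (hi_proof x).
Definition lo p q (x : 'I_(p * q)) : 'I_q := Ordinal (lo_proof x).
Definition pair_ix p q (i : 'I_p) (l : 'I_q) : 'I_(p * q) := Ordinal (pair_proof i l).

Section Defs.
Variable R : realType.
Local Notation C := R[i].

(* Kronecker (tensor) product A (x) B, first factor = most significant *)
Definition kron p1 q1 p2 q2 (A : 'M[C]_(p1, q1)) (B : 'M[C]_(p2, q2))
  : 'M[C]_(p1 * p2, q1 * q2) :=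
  \matrix_(i, j) (A (hi i) (hi j) * B (lo i) (lo j)).

(* A (x) B, with A acting on the first a qubits and B on the last k qubits *)
Definition kron_q a k (A : 'M[C]_(2 ^ a)) (B : 'M[C]_(2 ^ k)) : 'M[C]_(2 ^ (a + k)) :=
  castmx (esym (expnD 2 a k), esym (expnD 2 a k)) (kron A B).

(* partial trace Tr_{a+1,...,a+k} over the last k qubits *)
Definition ptrace_last a k (X : 'M[C]_(2 ^ (a + k))) : 'M[C]_(2 ^ a) :=
  let Y : 'M[C]_(2 ^ a * 2 ^ k) := castmx (expnD 2 a k, expnD 2 a k) X in
  \matrix_(i, j) \sum_(l < 2 ^ k) Y (pair_ix i l) (pair_ix j l).

Definition ctrans p q (A : 'M[C]_(p, q)) : 'M[C]_(q, p) := (map_mx Num.conj A)^T.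
Definition is_hermitian p (A : 'M[C]_p) := ctrans A = A.
Definition psd p (A : 'M[C]_p) :=
  is_hermitian A /\ forall v : 'cV[C]_p, 0 <= (ctrans v *m A *m v) 0 0.
Definition density p (A : 'M[C]_p) := psd A /\ \tr A = 1.

Definition vnorm p (v : 'cV[C]_p) : R :=
  Num.sqrt (\sum_(i < p) Normc.normc (v i 0) ^+ 2).
Definition specnorm p q (A : 'M[C]_(p, q)) : R :=
  sup [set vnorm (A *m v) | v in [set v : 'cV[C]_q | vnorm v = 1]].

Definition pauli (s : 'I_4) : 'M[C]_2 :=
  \matrix_(r < 2, c < 2)
    match val s with
    | 0%N => if r == c then 1 else 0
    | 1%N => if r == c then 0 else 1
    | 2%N => if r == c then 0 else
             if val r == 0%N then - (Complex 0 1) else Complex 0 1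
    | _ => if r == c then (if val r == 0%N then 1 else -1) else 0
    end.

(* Pauli string P_sigma = P_{sigma_1} (x) ... (x) P_{sigma_m}, qubit 1 first
   (most significant tensor factor) *)
Fixpoint pstring (s : seq 'I_4) : 'M[C]_(2 ^ size s) :=
  match s with
  | [::] => 1%:M
  | x :: s' => castmx (esym (expnS 2 (size s')), esym (expnS 2 (size s')))
                      (kron (pauli x) (pstring s'))
  end.

Definition pauli_str m (sigma : m.-tuple 'I_4) : 'M[C]_(2 ^ m) :=
  castmx (congr1 (expn 2) (size_tuple sigma), congr1 (expn 2) (size_tuple sigma))
         (pstring sigma).

(* Pauli coefficient \hat A(sigma) = Tr(P_sigma A) / 2^m; the unique
   coefficient in A = \sum_sigma \hat A(sigma) P_sigma *)
Definition pcoef m (A : 'M[C]_(2 ^ m)) (sigma : m.-tuple 'I_4) : C :=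
  \tr (pauli_str sigma *m A) / (2 ^ m)%:R.

Definition pweight m (sigma : m.-tuple 'I_4) : nat :=
  count (fun x => x != ord0) sigma.

Definition pdeg m (A : 'M[C]_(2 ^ m)) : nat :=
  \max_(sigma : m.-tuple 'I_4 | pcoef A sigma != 0) pweight sigma.

(* approximate Pauli degree deg_eps(A) = min { deg B : ||A - B|| <= eps }
   (the set is nonempty whenever eps >= 0; default 0 otherwise) *)
Definition deg_feasible m (A : 'M[C]_(2 ^ m)) (eps : R) (d : nat) : bool :=
  `[< exists B : 'M[C]_(2 ^ m), pdeg B = d /\ specnorm (A - B) <= eps >].

Definition approx_deg m (A : 'M[C]_(2 ^ m)) (eps : R) : nat :=
  match pselect (exists d, deg_feasible A eps d) with
  | left h => ex_minn h
  | right _ => 0%N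
  end.

End Defs.

From HB Require Import structures.
From mathcomp Require Import all_boot all_order all_algebra.
From mathcomp Require Import complex.
From mathcomp Require Import boolp classical_sets reals.
From mathcomp Require Import ring.
Set Implicit Arguments. Unset Strict Implicit. Unset Printing Implicit Defensive.
Import Order.TTheory GRing.Theory Num.Theory.
Local Open Scope ring_scope.

(* Take B with deg B = deg_eps(M) and ||M - B|| <= eps.  The map
   X |-> X_phi = Tr_2[(I (x) phi) X] is linear, does not increase the Pauli
   degree and does not increase the spectral norm, so B_phi witnesses
   deg_eps(M_phi) <= deg B.
   Degree: Tr(P_s X_phi) = Tr((P_s (x) phi) X) is a linear functional of phi,
   and the Pauli strings P_t span all matrices; so if the Pauli coefficient of
   X_phi at s is nonzero, so is that of X at some s ++ t, a string of weight
   at least that of s.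
   Norm: by the spectral theorem phi = sum_r d_r w_r w_r^* with d_r >= 0,
   sum_r d_r = 1 and unit w_r, whence u^* X_phi v = sum_r d_r (u (x) w_r)^* X
   (v (x) w_r) is a convex combination of matrix elements of X between unit
   vectors. *)

Lemma hi_pair p q (i : 'I_p) (l : 'I_q) : hi (pair_ix i l) = i.
Proof.
by apply: val_inj; rewrite /= divnMDl ?divn_small ?addn0 // (leq_ltn_trans _ (ltn_ord l)).
Qed.

Lemma lo_pair p q (i : 'I_p) (l : 'I_q) : lo (pair_ix i l) = l.
Proof. by apply: val_inj; rewrite /= modnMDl modn_small. Qed.

Lemma pair_hi_lo p q (x : 'I_(p * q)) : pair_ix (hi x) (lo x) = x.
Proof. by apply: val_inj; rewrite /= -divn_eq. Qed.

Lemma big_pair (V : nmodType) p q (F : 'I_(p * q) -> V) :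
  \sum_x F x = \sum_(i < p) \sum_(l < q) F (pair_ix i l).
Proof.
rewrite pair_big /= (reindex (fun x => pair_ix x.1 x.2)) //.
by exists (fun x => (hi x, lo x)) => [[i l] _|x _]; rewrite ?hi_pair ?lo_pair ?pair_hi_lo.
Qed.

Lemma hi_lo_cast_mulnA p1 p2 p3 (e : (p1 * (p2 * p3) = p1 * p2 * p3)%N) x :
  let y := cast_ord e x in
  [/\ hi (hi y) = hi x, lo (hi y) = hi (lo x) & lo y = lo (lo x)].
Proof.
have /and3P[_ _ p3_gt0] : [&& 0 < p1, 0 < p2 & 0 < p3]%N.
  by rewrite -!muln_gt0 (leq_ltn_trans _ (ltn_ord x)).
have p3_dvd : (p3 %| p2 * p3)%N by apply: dvdn_mull.
split; apply: val_inj => /=.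
- by rewrite -divnMA [(p3 * p2)%N]mulnC.
- by rewrite divn_modl // mulnK.
- by rewrite modn_dvdm.
Qed.

Section QubitMatrices.
Variable R : realType.
Local Notation C := R[i].

(** * Kronecker products *)

Lemma kron_is_bilinear p1 q1 p2 q2 :
  bilinear_for (GRing.Scale.Law.clone _ _ *:%R _) (GRing.Scale.Law.clone _ _ *:%R _)
    (@kron R p1 q1 p2 q2).
Proof.
split=> [B|A] c X Y; apply/matrixP => i j; rewrite !mxE.
- by rewrite mulrDl mulrA.
- by rewrite mulrDr mulrCA.
Qed.

HB.instance Definition _ p1 q1 p2 q2 :=
  bilinear_isBilinear.Build C 'M[C]_(p1, q1) 'M[C]_(p2, q2) 'M[C]_(p1 * p2, q1 * q2)
    _ _ (@kron R p1 q1 p2 q2) (kron_is_bilinear p1 q1 p2 q2).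

Lemma kron_is_linear p1 q1 p2 q2 (A : 'M[C]_(p1, q1)) : linear (@kron R p1 q1 p2 q2 A).
Proof. exact: (kron_is_bilinear p1 q1 p2 q2).2. Qed.

HB.instance Definition _ p1 q1 p2 q2 (A : 'M[C]_(p1, q1)) :=
  GRing.isLinear.Build C 'M[C]_(p2, q2) 'M[C]_(p1 * p2, q1 * q2) _ (kron A) (kron_is_linear A).

Lemma castmx_is_linear m n m' n' (e : (m = m') * (n = n')) : linear (@castmx C m n m' n' e).
Proof. by case: e => e1 e2; case: m' / e1; case: n' / e2 => c A B; rewrite !castmx_id. Qed.

HB.instance Definition _ m n m' n' e :=
  GRing.isLinear.Build C 'M[C]_(m, n) 'M[C]_(m', n') _ (@castmx C m n m' n' e)
    (castmx_is_linear e).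

Lemma castmx_mulmx m n r m' n' r' (e1 : m = m') (e2 : n = n') (e3 : r = r')
    (A : 'M[C]_(m, n)) (B : 'M[C]_(n, r)) :
  castmx (e1, e3) (A *m B) = castmx (e1, e2) A *m castmx (e2, e3) B.
Proof. by case: m' / e1; case: n' / e2; case: r' / e3; rewrite !castmx_id. Qed.

Lemma mxtrace_castmx n n' (e : n = n') (A : 'M[C]_n) : \tr (castmx (e, e) A) = \tr A.
Proof. by case: n' / e; rewrite castmx_id. Qed.

Lemma mulmx_kron m1 n1 r1 m2 n2 r2 (A : 'M[C]_(m1, n1)) (B : 'M[C]_(m2, n2))
    (A' : 'M[C]_(n1, r1)) (B' : 'M[C]_(n2, r2)) :
  kron A B *m kron A' B' = kron (A *m A') (B *m B').
Proof.
apply/matrixP => x y; rewrite !mxE big_pair big_distrlr /=.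
apply: eq_bigr => j _; apply: eq_bigr => l _.
by rewrite !mxE !hi_pair !lo_pair mulrACA.
Qed.

Lemma ctrans_kron p1 q1 p2 q2 (A : 'M[C]_(p1, q1)) (B : 'M[C]_(p2, q2)) :
  ctrans (kron A B) = kron (ctrans A) (ctrans B).
Proof. by apply/matrixP => i j; rewrite !mxE rmorphM. Qed.

Lemma kron_castmxl p1 q1 p1' q1' p2 q2 (e : (p1 = p1') * (q1 = q1'))
    (A : 'M[C]_(p1, q1)) (B : 'M[C]_(p2, q2)) :
  kron (castmx e A) B = castmx (congr1 (muln^~ p2) e.1, congr1 (muln^~ q2) e.2) (kron A B).
Proof. by case: e => e1 e2; case: p1' / e1; case: q1' / e2; rewrite !castmx_id. Qed.

Lemma kron_castmxr p1 q1 p2 q2 p2' q2' (e : (p2 = p2') * (q2 = q2'))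
    (A : 'M[C]_(p1, q1)) (B : 'M[C]_(p2, q2)) :
  kron A (castmx e B) = castmx (congr1 (muln p1) e.1, congr1 (muln q1) e.2) (kron A B).
Proof. by case: e => e1 e2; case: p2' / e1; case: q2' / e2; rewrite !castmx_id. Qed.

Lemma kron1mx p q (B : 'M[C]_(p, q)) :
  kron (1%:M : 'M[C]_1) B = castmx (esym (mul1n p), esym (mul1n q)) B.
Proof.
apply/matrixP => i j; rewrite castmxE !mxE !ord1 eqxx mul1r.
by congr (B _ _); apply: val_inj; rewrite /= modn_small // -[X in (_ < X)%N]mul1n.
Qed.

Lemma kronA p1 q1 p2 q2 p3 q3 (A : 'M[C]_(p1, q1)) (B : 'M[C]_(p2, q2))
    (D : 'M[C]_(p3, q3)) :
  kron A (kron B D) = castmx (esym (mulnA _ _ _), esym (mulnA _ _ _)) (kron (kron A B) D).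
Proof.
apply/matrixP => i j; rewrite castmxE /= !esymK !mxE mulrA.
by have [-> -> ->] := hi_lo_cast_mulnA (mulnA p1 p2 p3) i;
  have [-> -> ->] := hi_lo_cast_mulnA (mulnA q1 q2 q3) j.
Qed.

Lemma kron_delta_expansion p1 q1 p2 q2 (X : 'M[C]_(p1 * p2, q1 * q2)) :
  X = \sum_(a < p1) \sum_(b < q1)
        kron (delta_mx a b) (\matrix_(l, m) X (pair_ix a l) (pair_ix b m)).
Proof.
apply/matrixP => x y; rewrite summxE (bigD1 (hi x)) //= summxE (bigD1 (hi y)) //=.
rewrite [X in _ + X]big1 => [|a nax]; last first.
  by rewrite summxE big1 // => b _; rewrite !mxE eq_sym (negbTE nax) mul0r.
rewrite big1 => [|b nby]; last by rewrite !mxE [_ == b]eq_sym (negbTE nby) andbF mul0r.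
by rewrite !mxE !eqxx mul1r !pair_hi_lo !addr0.
Qed.

(** * Pauli strings *)

Lemma pstring_cat (s t : seq 'I_4) (e : (2 ^ size s * 2 ^ size t = 2 ^ size (s ++ t))%N) :
  pstring R (s ++ t) = castmx (e, e) (kron (pstring R s) (pstring R t)).
Proof.
elim: s e => [|x s IHs] e /=.
  by rewrite kron1mx castmx_comp castmx_id.
have e' : (2 ^ size s * 2 ^ size t = 2 ^ size (s ++ t))%N by rewrite size_cat expnD.
rewrite (IHs e') kron_castmxr castmx_comp kronA castmx_comp kron_castmxl castmx_comp.
exact: eq_castmx.
Qed.

Lemma pauli_str_cat a k (s : a.-tuple 'I_4) (t : k.-tuple 'I_4) :
  pauli_str R (cat_tuple s t) =
  castmx (esym (expnD 2 a k), esym (expnD 2 a k)) (kron (pauli_str R s) (pauli_str R t)).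
Proof.
have e : (2 ^ size s * 2 ^ size t = 2 ^ size (s ++ t))%N by rewrite size_cat expnD.
rewrite /pauli_str /= (pstring_cat e) kron_castmxl kron_castmxr !castmx_comp.
exact: eq_castmx.
Qed.

Lemma pauli_str_cons k x (t : k.-tuple 'I_4) :
  pauli_str R (cons_tuple x t) =
  castmx (esym (expnS 2 k), esym (expnS 2 k)) (kron (pauli R x) (pauli_str R t)).
Proof. by rewrite /pauli_str /= kron_castmxr !castmx_comp; apply: eq_castmx. Qed.

Lemma pauli_expansion (E : 'M[C]_2) :
  E = \sum_(x < 4) (\tr (pauli R x *m E) / 2) *: pauli R x.
Proof.
have ord2 (r : 'I_2) : r = ord0 \/ r = lift ord0 ord0.
  by case: r => [[|[|//]] ?]; [left | right]; apply: val_inj.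
have Y10 (a b : C) : (- 'i%C * a + 'i%C * b) / 2 * 'i%C = (a - b) / 2.
  by transitivity (- 'i%C ^+ 2 * (a - b) / 2); [ring | rewrite sqr_i; ring].
have Y01 (a b : C) : (- 'i%C * a + 'i%C * b) / 2 * - 'i%C = (b - a) / 2.
  by rewrite mulrN Y10 -mulNr opprB.
apply/matrixP => r c; rewrite summxE !big_ord_recl big_ord0 /mxtrace.
rewrite !big_ord_recl !big_ord0 !mxE !big_ord_recl !big_ord0 !mxE /=.
case: (ord2 r) => ->; case: (ord2 c) => -> /=.
all: rewrite ?(mul0r, mulr0, add0r, addr0, mul1r, mulr1).
- by field.
- by rewrite Y01; field.
- by rewrite Y10; field.
- by field.
Qed.

Lemma scalar_pauli_eq0 k (g : {scalar 'M[C]_(2 ^ k)}) :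
  (forall t : k.-tuple 'I_4, g (pauli_str R t) = 0) -> g =1 \0.
Proof.
elim: k g => [|k IHk] g gP Y /=.
  have -> : Y = Y 0 0 *: pauli_str R [tuple].
    by rewrite [LHS]mx11_scalar -scalemx1 /pauli_str castmx_id.
  by rewrite linearZ /= gP mulr0.
pose e := esym (expnS 2 k).
have gPx x : g \o castmx (e, e) \o kron (pauli R x) =1 \0.
  by apply: IHk => t /=; rewrite -pauli_str_cons gP.
have gE (E : 'M[C]_2) Z : g (castmx (e, e) (kron E Z)) = 0.
  rewrite [E]pauli_expansion linear_sumlz !linear_sum big1 // => x _.
  by rewrite linearZl_LR !linearZ /= [g _]gPx mulr0.
rewrite -[Y](castmxK (expnS 2 k) (expnS 2 k)) (kron_delta_expansion (castmx _ Y)).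
by rewrite !linear_sum big1 // => a _; rewrite !linear_sum big1 // => b _; apply: gE.
Qed.

(** * Partial trace and Pauli degree *)

Definition ptrace p q (X : 'M[C]_(p * q)) : 'M[C]_p :=
  \matrix_(i, j) \sum_(l < q) X (pair_ix i l) (pair_ix j l).

Lemma ptrace_is_linear p q : linear (@ptrace p q).
Proof.
move=> c X Y; apply/matrixP => i j; rewrite !mxE big_distrr -big_split /=.
by apply: eq_bigr => l _; rewrite !mxE.
Qed.

HB.instance Definition _ p q :=
  GRing.isLinear.Build C 'M[C]_(p * q) 'M[C]_p _ (@ptrace p q) (@ptrace_is_linear p q).

Lemma ptrace_last_kron_q a k (phi : 'M[C]_(2 ^ k)) (X : 'M[C]_(2 ^ (a + k))) :
  ptrace_last (kron_q 1%:M phi *m X) =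
  ptrace (kron 1%:M phi *m castmx (expnD 2 a k, expnD 2 a k) X).
Proof. by rewrite /ptrace_last /kron_q (castmx_mulmx _ (expnD 2 a k)) castmxKV. Qed.

Lemma ptrace_last_kron_qB a k (phi : 'M[C]_(2 ^ k)) (X Y : 'M[C]_(2 ^ (a + k))) :
  ptrace_last (kron_q 1%:M phi *m X) - ptrace_last (kron_q 1%:M phi *m Y) =
  ptrace_last (kron_q 1%:M phi *m (X - Y)).
Proof. by rewrite !ptrace_last_kron_q -linearB -mulmxBr -linearB. Qed.

Lemma mxtrace_mul_ptrace p q (A : 'M[C]_p) (Y : 'M[C]_(p * q)) :
  \tr (A *m ptrace Y) = \tr (kron A 1%:M *m Y).
Proof.
rewrite /mxtrace big_pair; apply: eq_bigr => i _; rewrite mxE.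
under eq_bigr do rewrite mxE mulr_sumr.
rewrite exchange_big; apply: eq_bigr => l _; rewrite mxE big_pair.
apply: eq_bigr => j _; rewrite (bigD1 l) //= big1 => [|l' nl']; last first.
  by rewrite !mxE !lo_pair [l == _]eq_sym (negbTE nl') mulr0 mul0r.
by rewrite !mxE !hi_pair !lo_pair eqxx mulr1 addr0.
Qed.

Lemma mxtrace_pauli_ptrace_last a k (s : a.-tuple 'I_4) (phi : 'M[C]_(2 ^ k))
    (X : 'M[C]_(2 ^ (a + k))) :
  \tr (pauli_str R s *m ptrace_last (kron_q 1%:M phi *m X)) =
  \tr (kron (pauli_str R s) phi *m castmx (expnD 2 a k, expnD 2 a k) X).
Proof. by rewrite ptrace_last_kron_q mxtrace_mul_ptrace mulmxA mulmx_kron mulmx1 mul1mx. Qed.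

Lemma mxtrace_pauli_cat a k (s : a.-tuple 'I_4) (t : k.-tuple 'I_4) (X : 'M[C]_(2 ^ (a + k))) :
  \tr (pauli_str R (cat_tuple s t) *m X) =
  \tr (kron (pauli_str R s) (pauli_str R t) *m castmx (expnD 2 a k, expnD 2 a k) X).
Proof.
by rewrite pauli_str_cat -(mxtrace_castmx (expnD 2 a k)) (castmx_mulmx _ (expnD 2 a k)) castmxKV.
Qed.

Lemma pcoef_ptrace_last_eq0 a k (phi : 'M[C]_(2 ^ k)) (X : 'M[C]_(2 ^ (a + k)))
    (s : a.-tuple 'I_4) :
  (forall t : k.-tuple 'I_4, pcoef X (cat_tuple s t) = 0) ->
  pcoef (ptrace_last (kron_q 1%:M phi *m X)) s = 0.
Proof.
move=> Xs0; rewrite /pcoef mxtrace_pauli_ptrace_last.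
(* By mxtrace_pauli_cat, [g (pauli_str t)] is a multiple of [pcoef X (s ++ t)]. *)
pose g : {scalar 'M[C]_(2 ^ k)} :=
  mxtrace \o mulmxr (castmx (expnD 2 a k, expnD 2 a k) X) \o kron (pauli_str R s).
rewrite -[\tr _]/(g phi) scalar_pauli_eq0 ?mul0r // => t /=.
have /eqP := Xs0 t; rewrite /pcoef mxtrace_pauli_cat.
by rewrite mulf_eq0 invr_eq0 pnatr_eq0 expn_eq0 orbF => /eqP.
Qed.

Lemma pdeg_ptrace_last_le a k (phi : 'M[C]_(2 ^ k)) (X : 'M[C]_(2 ^ (a + k))) :
  (pdeg (ptrace_last (kron_q 1%:M phi *m X)) <= pdeg X)%N.
Proof.
apply/bigmax_leqP => s nz_s.
have /existsP[t nz_st] : [exists t : k.-tuple 'I_4, pcoef X (cat_tuple s t) != 0].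
  apply: contraNT nz_s => /existsPn Xs0.
  by apply/eqP/pcoef_ptrace_last_eq0 => t; apply/eqP/negbNE/Xs0.
apply: leq_trans (leq_bigmax_cond (F := @pweight _) _ nz_st).
by rewrite /pweight count_cat leq_addr.
Qed.

(** * Vector and spectral norms *)

Local Open Scope complex_scope.

Lemma real_complex_normc (z : C) : (Normc.normc z)%:C = `|z|.
Proof. by case: z => x y; rewrite normc_def. Qed.

Lemma normc_ge0 (z : C) : 0 <= Normc.normc z.
Proof. by rewrite -ler0c real_complex_normc normr_ge0. Qed.

Lemma conj_real_complex (x : R) : Num.conj x%:C = x%:C.
Proof. exact: conjc_real. Qed.

Lemma ctransK p q (A : 'M[C]_(p, q)) : ctrans (ctrans A) = A.
Proof. by apply/matrixP => i j; rewrite !mxE conjCK. Qed.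

Lemma ctransZ p q c (A : 'M[C]_(p, q)) : ctrans (c *: A) = Num.conj c *: ctrans A.
Proof. by apply/matrixP => i j; rewrite !mxE rmorphM. Qed.

Lemma ctrans_trmxC p q (A : 'M[C]_(p, q)) : ctrans A = map_mx Num.conj A^T.
Proof. by rewrite /ctrans map_trmx. Qed.

Lemma vnorm_ge0 p (v : 'cV[C]_p) : 0 <= vnorm v.
Proof. exact: sqrtr_ge0. Qed.

Lemma sqr_vnorm p (v : 'cV[C]_p) : vnorm v ^+ 2 = \sum_i Normc.normc (v i 0) ^+ 2.
Proof. by rewrite sqr_sqrtr // sumr_ge0 // => i _; rewrite sqr_ge0. Qed.

Lemma sqr_vnormC p (v : 'cV[C]_p) : (vnorm v ^+ 2)%:C = (ctrans v *m v) 0 0.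
Proof.
rewrite sqr_vnorm rmorph_sum mxE; apply: eq_bigr => i _.
by rewrite rmorphXn /= real_complex_normc !mxE normCKC.
Qed.

Lemma vnorm_eq1 p (v : 'cV[C]_p) : (ctrans v *m v) 0 0 = 1 -> vnorm v = 1.
Proof.
move=> vv1; apply/eqP; rewrite -sqrp_eq1 ?vnorm_ge0 //.
by apply/eqP/complexI; rewrite sqr_vnormC vv1.
Qed.

Lemma vnorm0 p : vnorm (0 : 'cV[C]_p) = 0.
Proof. by rewrite /vnorm big1 ?sqrtr0 // => i _; rewrite mxE Normc.normc0 expr0n. Qed.

Lemma dotmx_trmx p (x y : 'cV[C]_p) : dotmx x^T y^T = (ctrans y *m x) 0 0.
Proof. by rewrite dotmxE !mxE; apply: eq_bigr => i _; rewrite !mxE mulrC. Qed.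

Lemma form_CauchySchwarz p (x y : 'cV[C]_p) :
  `|(ctrans x *m y) 0 0| <= (vnorm x * vnorm y)%:C.
Proof.
have : `|dotmx y^T x^T| ^+ 2 <= dotmx y^T y^T * dotmx x^T x^T.
  exact: (CauchySchwarz (dotmx (n:=p)) y^T x^T).1.
rewrite !dotmx_trmx -!sqr_vnormC -rmorphM -exprMn rmorphXn /= mulrC.
by rewrite ler_pXn2r // nnegrE ?normr_ge0 ?ler0c ?mulr_ge0 ?vnorm_ge0.
Qed.

Lemma vnorm_kron p q (u : 'cV[C]_p) (w : 'cV[C]_q) : vnorm (kron u w) = vnorm u * vnorm w.
Proof.
apply/eqP; rewrite -(@eqrXn2 _ 2) ?mulr_ge0 ?vnorm_ge0 //; apply/eqP/complexI.
rewrite (sqr_vnormC (kron u w)) (ctrans_kron u w) (mulmx_kron (ctrans u) (ctrans w) u w).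
by rewrite mxE !ord1 -!sqr_vnormC -rmorphM exprMn.
Qed.

Lemma vnorm_mulmx_le p q (X : 'M[C]_(p, q)) (v : 'cV[C]_q) :
  vnorm (X *m v) <= Num.sqrt (\sum_i vnorm (ctrans (row i X)) ^+ 2) * vnorm v.
Proof.
have Xv_le i : Normc.normc ((X *m v) i 0) <= vnorm (ctrans (row i X)) * vnorm v.
  have -> : (X *m v) i 0 = (ctrans (ctrans (row i X)) *m v) 0 0.
    by rewrite ctransK -row_mul [RHS]mxE.
  by rewrite -lecR real_complex_normc form_CauchySchwarz.
rewrite -(ger0_norm (vnorm_ge0 v)) -sqrtr_sqr -sqrtrM; last first.
  by rewrite sumr_ge0 // => i _; rewrite sqr_ge0.
apply: ler_wsqrtr; rewrite mulr_suml; apply: ler_sum => i _.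
by rewrite -exprMn ler_pXn2r ?nnegrE ?mulr_ge0 ?vnorm_ge0 ?normc_ge0 ?Xv_le.
Qed.

Lemma vnorm_mulmx_le_specnorm p q (X : 'M[C]_(p, q)) (v : 'cV[C]_q) :
  vnorm v = 1 -> vnorm (X *m v) <= specnorm X.
Proof.
move=> v1; apply: sup_upper_bound; last by exists v.
split; first by exists (vnorm (X *m v)), v.
exists (Num.sqrt (\sum_i vnorm (ctrans (row i X)) ^+ 2)) => _ [w w1 <-].
by rewrite -[leRHS]mulr1 -w1 vnorm_mulmx_le.
Qed.

Lemma specnorm_no_unit p q (X : 'M[C]_(p, q)) :
  ~ (exists v : 'cV[C]_q, vnorm v = 1) -> specnorm X = 0.
Proof.
(* This happens only for q = 0, where [specnorm] is the sup of the empty set. *)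
move=> no_unit; rewrite /specnorm.
suff -> : [set vnorm (X *m v) | v in [set v | vnorm v = 1]]%classic = set0 by exact: sup0.
by apply/seteqP; split => // r [v v1 _]; apply: no_unit; exists v.
Qed.

Lemma specnorm_ge0 p q (X : 'M[C]_(p, q)) : 0 <= specnorm X.
Proof.
have [[v v1]|no_unit] := pselect (exists v : 'cV[C]_q, vnorm v = 1).
  exact: le_trans (vnorm_ge0 _) (vnorm_mulmx_le_specnorm X v1).
by rewrite specnorm_no_unit.
Qed.

Lemma specnorm_le p q (X : 'M[C]_(p, q)) c : 0 <= c ->
  (forall v, vnorm v = 1 -> vnorm (X *m v) <= c) -> specnorm X <= c.
Proof.
move=> c_ge0 Xc; have [[v v1]|no_unit] := pselect (exists v : 'cV[C]_q, vnorm v = 1).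
  by apply: ge_sup => [|_ [w w1 <-]]; [exists (vnorm (X *m v)), v | exact: Xc].
by rewrite specnorm_no_unit.
Qed.

Lemma specnorm0 p q : specnorm (0 : 'M[C]_(p, q)) = 0.
Proof.
apply/eqP; rewrite eq_le specnorm_ge0 andbT.
by apply: specnorm_le => // v _; rewrite mul0mx vnorm0.
Qed.

Lemma specnorm_castmx n n' (e : n = n') (X : 'M[C]_n) :
  specnorm (castmx (e, e) X) = specnorm X.
Proof. by case: n' / e; rewrite castmx_id. Qed.

Lemma form_le_specnorm p q (X : 'M[C]_(p, q)) (u : 'cV[C]_p) (v : 'cV[C]_q) :
  vnorm u = 1 -> vnorm v = 1 -> `|(ctrans u *m X *m v) 0 0| <= (specnorm X)%:C.
Proof.
move=> u1 v1; rewrite -mulmxA; apply: le_trans (form_CauchySchwarz _ _) _.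
by rewrite lecR u1 mul1r vnorm_mulmx_le_specnorm.
Qed.

Lemma specnorm_le_form p q (X : 'M[C]_(p, q)) c : 0 <= c ->
  (forall u v, vnorm u = 1 -> vnorm v = 1 -> `|(ctrans u *m X *m v) 0 0| <= c%:C) ->
  specnorm X <= c.
Proof.
move=> c_ge0 Xc; apply: specnorm_le => // v v1; set y := X *m v.
have [->|y_neq0] := eqVneq (vnorm y) 0; first by [].
(* Normalising [y] gives a unit [u] with [u^* X v = |X v|]. *)
pose u := ((vnorm y)^-1)%:C *: y.
have uy : (ctrans u *m y) 0 0 = (vnorm y)%:C.
  rewrite ctransZ -scalemxAl mxE -sqr_vnormC conj_real_complex -rmorphM expr2 mulKf //.
have u1 : vnorm u = 1.
  apply: vnorm_eq1; rewrite -scalemxAr mxE uy -rmorphM mulVf //.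
rewrite -lecR -uy -[leLHS]ger0_norm; last by rewrite uy ler0c vnorm_ge0.
by rewrite /y mulmxA Xc.
Qed.

(** * Density operators *)

Lemma density_spectral_decomposition q (phi : 'M[C]_q) : density phi ->
  exists (d : 'I_q -> C) (w : 'I_q -> 'cV[C]_q),
    [/\ forall r, 0 <= d r, \sum_r d r = 1, forall r, vnorm (w r) = 1 &
        phi = \sum_r d r *: (w r *m ctrans (w r))].
Proof.
move=> [[herm psd] tr1]; set P := spectralmx phi; set d := spectral_diag phi.
pose w r := ctrans (row r P).
have /row_unitarymxP P_orth := spectral_unitarymx phi.
have orth r s : (ctrans (w r) *m w s) 0 0 = (r == s)%:R.
  by rewrite ctransK /w ctrans_trmxC -dotmxE P_orth.
have phiE : phi = \sum_r d 0 r *: (w r *m ctrans (w r)).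
  have /orthomx_spectralP {1}-> : phi \is normalmx.
    by apply/normalmxP; rewrite -ctrans_trmxC herm.
  rewrite invmx_unitary ?spectral_unitarymx // diag_mx_sum_delta.
  rewrite mulmx_sumr mulmx_suml; apply: eq_bigr => r _.
  rewrite -scalemxAr -scalemxAl -(mul_delta_mx (0 : 'I_1)) mulmxA -colE -mulmxA -rowE.
  congr (_ *: (_ *m _)); last by rewrite ctransK.
  by apply/matrixP => i j; rewrite !mxE.
have sandwich r s : (ctrans (w r) *m (w s *m ctrans (w s)) *m w r) 0 0 = (r == s)%:R.
  rewrite mulmxA -mulmxA [ctrans (w r) *m w s]mx11_scalar mul_scalar_mx mxE !orth.
  by rewrite eq_sym -natrM mulnb andbb.
exists (fun r => d 0 r), w; split => [r||r|//].
- suff -> : d 0 r = (ctrans (w r) *m phi *m w r) 0 0 by apply: psd.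
  rewrite [in RHS]phiE mulmx_sumr mulmx_suml summxE (bigD1 r) //= big1 => [|s nsr].
    by rewrite -scalemxAr -scalemxAl mxE sandwich eqxx mulr1 addr0.
  by rewrite -scalemxAr -scalemxAl mxE sandwich eq_sym (negbTE nsr) mulr0.
- rewrite -tr1 phiE linear_sum; apply: eq_bigr => r _.
  by rewrite linearZ /= mxtrace_mulC trace_mx11 orth eqxx mulr1.
- by apply: vnorm_eq1; rewrite orth eqxx.
Qed.

Lemma form_ptrace_kron p q (u v : 'cV[C]_p) (w : 'cV[C]_q) (X : 'M[C]_(p * q)) :
  (ctrans u *m ptrace (kron 1%:M (w *m ctrans w) *m X) *m v) 0 0 =
  (ctrans (kron u w) *m X *m kron v w) 0 0.
Proof.
(* Both sides are traces: [u^* (ptrace Y) v = \tr ((v u^* (x) 1) Y)], and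
   [v u^* (x) w w^* = (v (x) w) (u (x) w)^*]. *)
rewrite -!trace_mx11 mxtrace_mulC mulmxA mxtrace_mul_ptrace mulmxA mulmx_kron mulmx1 mul1mx.
by rewrite -(mulmx_kron v w (ctrans u) (ctrans w)) -(ctrans_kron u w) -mulmxA mxtrace_mulC.
Qed.

Lemma specnorm_ptrace_le p q (phi : 'M[C]_q) (X : 'M[C]_(p * q)) :
  density phi -> specnorm (ptrace (kron 1%:M phi *m X)) <= specnorm X.
Proof.
move=> /density_spectral_decomposition[d [w [d_ge0 d_sum w1 ->]]].
apply: specnorm_le_form (specnorm_ge0 X) _ => u v u1 v1.
rewrite linear_sum mulmx_suml linear_sum mulmx_sumr mulmx_suml summxE.
apply: le_trans (ler_norm_sum _ _ _) _.
apply: (@le_trans _ _ (\sum_r d r * (specnorm X)%:C)); last first.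
  by rewrite -mulr_suml d_sum mul1r.
apply: ler_sum => r _.
rewrite linearZ /= -scalemxAl linearZ /= -scalemxAr -scalemxAl mxE form_ptrace_kron.
have unit_kron (x : 'cV[C]_p) : vnorm x = 1 -> vnorm (kron x (w r)) = 1.
  by move=> x1; rewrite vnorm_kron x1 w1 mulr1.
by rewrite normrM ger0_norm // ler_wpM2l // form_le_specnorm ?unit_kron.
Qed.

Lemma specnorm_ptrace_last_le a k (phi : 'M[C]_(2 ^ k)) (X : 'M[C]_(2 ^ (a + k))) :
  density phi -> specnorm (ptrace_last (kron_q 1%:M phi *m X)) <= specnorm X.
Proof.
by rewrite ptrace_last_kron_q -(specnorm_castmx (expnD 2 a k) X); apply: specnorm_ptrace_le.
Qed.

(** * Approximate degree *)

Lemma approx_deg_le m (A : 'M[C]_(2 ^ m)) eps d :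
  deg_feasible A eps d -> (approx_deg A eps <= d)%N.
Proof.
move=> Ad; rewrite /approx_deg; case: pselect => [ex|[]]; last by exists d.
by case: ex_minnP => d0 _; apply.
Qed.

Lemma approx_deg_feasible m (A : 'M[C]_(2 ^ m)) eps :
  0 <= eps -> deg_feasible A eps (approx_deg A eps).
Proof.
move=> eps_ge0; rewrite /approx_deg; case: pselect => [ex|[]]; first by case: ex_minnP.
by exists (pdeg A); apply/asboolP; exists A; rewrite subrr specnorm0.
Qed.

End QubitMatrices.

Unset Implicit Arguments.

Theorem lemma2p12 (R : realType) (a k : nat)
  (M : 'M[R[i]]_(2 ^ (a + k))) (phi : 'M[R[i]]_(2 ^ k)) (eps : R) :
  is_hermitian M -> density phi -> 0 <= eps <= 1 ->
  (approx_deg (ptrace_last (kron_q 1%:M phi *m M)) eps <= approx_deg M eps)%N.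
Proof.
move=> _ phi_density /andP[eps_ge0 _].
have /asboolP[B [<- MB]] := approx_deg_feasible M eps_ge0.
apply: leq_trans (pdeg_ptrace_last_le phi B).
apply/approx_deg_le/asboolP; exists (ptrace_last (kron_q 1%:M phi *m B)); split => //.
by rewrite ptrace_last_kron_qB (le_trans (specnorm_ptrace_last_le _ phi_density)).
Qed.
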